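(* Let $\epsilon>0$. Then $\hat\Psi(u)\neq\emptyset$ for every $u\in\mathbb{R}^k$ if and only if $\epsilon\in(0,\tfrac{1}{2k}]$.
   Context: $[k]=\{1,\dots,k\}$, $\mathcal{Y}=\{-1,1\}^k$, $\mathcal{V}=\{-1,0,1\}^k$. $u\odot u'$ entrywise product, $|u|$ entrywise absolute value, $\mathbbm{1}$ all-ones; $\boxed{u}=\mathrm{sign}(u)\odot\min(|u|,\mathbbm{1})$. For $A\subseteq\mathbb{R}^k$, $d_\infty(A,u)=\inf_{a\in A}\|a-u\|_\infty$. For a permutation $\pi$ of $[k]$ and $i\in\{0,\dots,k\}$, $\mathbbm{1}_{\pi,i}$ is the indicator vector of $\{\pi_1,\dots,\pi_i\}$; $V_{\pi,y}=\{\mathbbm{1}_{\pi,i}\odot y: i=0,\dots,k\}$; $\mathcal{V}^{\text{face}}=\bigcup_{\pi,y\in\mathcal{Y}}2^{V_{\pi,y}}$; $\hat\Psi(u)=\bigcap\{V\in\mathcal{V}^{\text{face}}:d_\infty(\mathrm{conv}\,V,\boxed{u})<\epsilon\}$. *)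

From HB Require Import structures.
From mathcomp Require Import all_boot all_order all_algebra all_fingroup.
From mathcomp Require Import all_classical all_reals.
From mathcomp Require Import ereal.
Set Implicit Arguments. Unset Strict Implicit. Unset Printing Implicit Defensive.
Import Order.TTheory GRing.Theory Num.Theory.
Local Open Scope classical_set_scope.
Local Open Scope ring_scope.

Section Defs.
Variables (R : realType) (k : nat).

Definition linf (a u : 'rV[R]_k) : R :=
  \big[Num.max/0]_(i < k) `|a ord0 i - u ord0 i|.

(* d_inf(A,u) = inf_{a in A} ||a-u||_inf, as an extended real (inf of empty = +oo) *)
Definition d_inf (A : set 'rV[R]_k) (u : 'rV[R]_k) : \bar R :=
  ereal_inf [set (linf a u)%:E | a in A].

Definition conv (V : set 'rV[R]_k) : set 'rV[R]_k :=
  [set p | exists (n : nat) (w : 'I_n -> R) (x : 'I_n -> 'rV[R]_k),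
     (forall i, V (x i)) /\ (forall i, 0 <= w i) /\ (\sum_(i < n) w i = 1) /\
     p = \sum_(i < n) w i *: x i].

Definition clip (u : 'rV[R]_k) : 'rV[R]_k :=
  \row_j (Num.sg (u ord0 j) * Num.min `|u ord0 j| 1).

Definition ind_perm (pi : 'S_k) (i : nat) : 'rV[R]_k :=
  \row_j (if [exists m : 'I_k, (m < i)%N && (pi m == j)] then 1 else 0).

(* y in {-1,1}^k represented by a boolean vector *)
Definition signvec (y : 'I_k -> bool) : 'rV[R]_k :=
  \row_j (if y j then 1 else -1).

Definition Vpy (pi : 'S_k) (y : 'I_k -> bool) : set 'rV[R]_k :=
  [set v | exists2 i : nat, (i <= k)%N &
     v = \row_j (ind_perm pi i ord0 j * signvec y ord0 j)].

Definition is_face (V : set 'rV[R]_k) : Prop :=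
  exists (pi : 'S_k) (y : 'I_k -> bool), V `<=` Vpy pi y.

Definition Psi_hat (eps : R) (u : 'rV[R]_k) : set 'rV[R]_k :=
  \bigcap_(V in [set V | is_face V /\ (d_inf (conv V) (clip u) < eps%:E)%E]) V.

End Defs.

From HB Require Import structures.
From mathcomp Require Import all_boot all_order all_algebra all_fingroup.
From mathcomp Require Import all_classical all_reals ereal.
From mathcomp Require Import zify lra.
Set Implicit Arguments.
Unset Strict Implicit.
Unset Printing Implicit Defensive.
Import Order.TTheory GRing.Theory Num.Theory.
Local Open Scope classical_set_scope.
Local Open Scope ring_scope.

(* Write p for the clipped vector.  When eps <= 1/(2k), the k numbers |p_j|
   miss one of the k+1 disjoint bands (c - eps, c + eps), c = 2 s eps with
   s = 0..k, and c <= 1.  Let v be sign(p_j) where |p_j| > c and 0 elsewhere.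
   A point a = sum_l w_l 1_{pi,m_l} (.) y of conv V_{pi,y} has
   |a_j| = G(pi^-1 j + 1), where G(t) is the weight of the levels m_l >= t, a
   nonincreasing function.  If a is eps-close to p, the coordinates lying above
   the band are exactly the first i ones in the order pi, and G drops at i:
   some vertex of the face is 1_{pi,i} (.) y = v.  So v is in Psi_hat.
   When eps > 1/(2k), the staircase p_j = (k - j - 1/2)/k is within 1/(2k) of
   the barycentre of the vertices of V_{id,1} other than 1_{id,t}, for each
   t = 0..k, and these k+1 faces have no common point. *)

Lemma exists_avoided_band (R : realFieldType) k (f : 'I_k -> R) (e : R) :
  0 < e -> exists s : 'I_k.+1, forall j, e <= `|f j - s%:R * (2 * e)|.
Proof.
move=> e_gt0; apply: contrapT => none.
have hit (s : 'I_k.+1) : exists j, `|f j - s%:R * (2 * e)| < e.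
  apply: contrapT => miss; apply: none; exists s => j.
  by rewrite leNgt; apply/negP => hj; apply: miss; exists j.
have [g g_hit] := choice hit.
suff /leq_card : injective g by rewrite !card_ord ltnn.
have far (s1 s2 : 'I_k.+1) : (s1 < s2)%N -> g s1 != g s2.
  move=> lt12; apply/eqP => eq_g; have := g_hit s1; have := g_hit s2.
  have : (s1 : nat)%:R + 1 <= (s2 : nat)%:R :> R by rewrite natr1 ler_nat.
  rewrite eq_g !ltr_norml => le12 /andP[? ?] /andP[? ?].
  have : ((s2 : nat)%:R - (s1 : nat)%:R) * (2 * e) < 1 * (2 * e) :> R.
    by rewrite mulrBl mul1r; lra.
  rewrite ltr_pM2r; last by rewrite mulr_gt0.
  lra.
move=> s1 s2 eq_g.
by case: (ltngtP s1 s2) => [/far|/far|/val_inj //]; rewrite eq_g eqxx.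
Qed.

Lemma sg_near (R : realDomainType) (a p c e : R) :
  0 <= c -> `|a - p| < e -> c + e <= `|p| -> c < `|a| /\ Num.sg a = Num.sg p.
Proof.
rewrite ltr_norml => c_ge0 /andP[lo hi].
have [p_ge0 | p_lt0] := leP 0 p.
- rewrite ger0_norm // => far.
  have [a_gt0 p_gt0] : 0 < a /\ 0 < p by split; lra.
  by rewrite gtr0_norm ?gtr0_sg //; lra.
- rewrite ltr0_norm // => far.
  have a_lt0 : a < 0 by lra.
  by rewrite ltr0_norm ?ltr0_sg //; lra.
Qed.

Lemma norm_lt_near (R : realDomainType) (a p c e : R) :
  `|a - p| < e -> `|p| <= c - e -> `|a| < c.
Proof.
move=> close small; have := ler_normD (a - p) p; rewrite subrK; lra.
Qed.

Lemma sum_leq_ord n m : (\sum_(i < n) (m <= i) = n - m)%N.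
Proof.
elim: n => [|n IH]; first by rewrite big_ord0.
by rewrite big_ord_recr /= IH; case: leqP => ?; lia.
Qed.

Lemma bump_leS h i : (bump h i <= i.+1)%N.
Proof. exact: leq_add (leq_b1 _) (leqnn i). Qed.

Section Chains.
Variables (R : realType) (k : nat).

Definition chain_vertex (pi : 'S_k) (y : 'I_k -> bool) (i : nat) : 'rV[R]_k :=
  \row_j (ind_perm R pi i ord0 j * signvec R y ord0 j).

Lemma signvecE (y : 'I_k -> bool) j : signvec R y ord0 j = if y j then 1 else -1.
Proof. by rewrite mxE. Qed.

Lemma norm_signvecM (y : 'I_k -> bool) j (x : R) :
  `|signvec R y ord0 j * x| = `|x|.
Proof. by rewrite signvecE; case: (y j); rewrite ?mul1r ?mulN1r ?normrN. Qed.

Lemma sg_signvecM (y : 'I_k -> bool) j (x : R) :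
  0 < x -> Num.sg (signvec R y ord0 j * x) = signvec R y ord0 j.
Proof.
by move=> x_gt0; rewrite signvecE; case: (y j); rewrite ?mul1r ?mulN1r ?sgrN gtr0_sg.
Qed.

Lemma chain_vertexE pi y i j :
  chain_vertex pi y i ord0 j =
  if ((pi^-1)%g j < i)%N then signvec R y ord0 j else 0.
Proof.
rewrite /chain_vertex /ind_perm !mxE.
have -> : [exists m : 'I_k, (m < i)%N && (pi m == j)] = ((pi^-1)%g j < i)%N.
  apply/existsP/idP => [[m /andP[lt_m_i /eqP <-]] | lt_j_i]; first by rewrite permK.
  by exists ((pi^-1)%g j); rewrite lt_j_i permKV eqxx.
by case: ifP; rewrite ?mul1r ?mul0r.
Qed.

Lemma chain_vertex_inj pi y i t : (i <= k)%N -> (t <= k)%N ->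
  chain_vertex pi y i = chain_vertex pi y t -> i = t.
Proof.
wlog lt_i_t : i t / (i < t)%N.
  move=> wlog_lt i_le t_le eq_it.
  by case: (ltngtP i t) => [lt|lt|//]; [apply: wlog_lt | symmetry; apply: wlog_lt].
move=> _ t_le /rowP/(_ (pi (Ordinal (leq_trans lt_i_t t_le)))).
rewrite !chain_vertexE permK /= ltnn lt_i_t signvecE.
by case: (y _) => /esym/eqP; rewrite ?oppr_eq0 oner_eq0.
Qed.

Definition tail_mass n (w : 'I_n -> R) (m : 'I_n -> nat) (t : nat) : R :=
  \sum_(l < n | (t <= m l)%N) w l.

Lemma chain_comb_coord pi y n (w : 'I_n -> R) m j :
  (\sum_(l < n) w l *: chain_vertex pi y (m l)) ord0 j =
  signvec R y ord0 j * tail_mass w m ((pi^-1)%g j).+1.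
Proof.
rewrite summxE /tail_mass mulr_sumr [in RHS]big_mkcond /=; apply: eq_bigr => l _.
by rewrite mxE chain_vertexE; case: ifP; rewrite ?mulr0 // mulrC.
Qed.

Section TailMass.
Variables (n : nat) (w : 'I_n -> R) (m : 'I_n -> nat).
Hypothesis w_ge0 : forall l, 0 <= w l.

Lemma tail_mass_ge0 t : 0 <= tail_mass w m t.
Proof. exact: sumr_ge0. Qed.

Lemma tail_mass_nonincr : {homo tail_mass w m : a b / (a <= b)%N >-> b <= a}.
Proof.
move=> a b le_ab; rewrite /tail_mass [leLHS]big_mkcond [leRHS]big_mkcond /=.
apply: ler_sum => l _.
by case: ifP => [le_bm | _]; [rewrite (leq_trans le_ab le_bm) | case: ifP].
Qed.

Lemma tail_mass0 : tail_mass w m 0 = \sum_(l < n) w l.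
Proof. by apply: eq_bigl. Qed.

Lemma tail_mass_eq0 t : (forall l, m l < t)%N -> tail_mass w m t = 0.
Proof. by move=> lt_t; apply: big_pred0 => l; rewrite leqNgt lt_t. Qed.

Lemma tail_mass_drop t : tail_mass w m t.+1 < tail_mass w m t -> exists l, m l = t.
Proof.
move=> drop; apply: contrapT => no_level.
suff same : tail_mass w m t.+1 = tail_mass w m t by rewrite same ltxx in drop.
apply: eq_bigl => l; rewrite [in RHS]leq_eqVlt; case: eqP => // eq_t.
by exfalso; apply: no_level; exists l.
Qed.

End TailMass.

Lemma threshold_cut (G : nat -> R) (c : R) (pi : 'S_k) (T : pred 'I_k) :
  {homo G : a b / (a <= b)%N >-> b <= a} -> G 0%N = 1 -> G k.+1 = 0 ->
  0 <= c <= 1 ->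
  (forall j, T j -> c < G ((pi^-1)%g j).+1) ->
  (forall j, ~~ T j -> G ((pi^-1)%g j).+1 < c) ->
  exists2 i, (forall j, T j = ((pi^-1)%g j < i)%N) & G i.+1 < G i.
Proof.
move=> G_nonincr G0 Gk /andP[c_ge0 c_le1] above below.
have ex_cut : exists t, G t.+1 <= c by exists k; rewrite Gk.
case: (ex_minnP ex_cut) => i Gi_le i_min.
have before_cut t : (t < i)%N -> c < G t.+1.
  by move=> lt_t; rewrite ltNge; apply/negP => /i_min; rewrite leqNgt lt_t.
have c_le_Gi : c <= G i.
  by case: i before_cut {Gi_le i_min} => [|i] before; [rewrite G0 | exact/ltW/before].
have cut j : T j = ((pi^-1)%g j < i)%N.
  apply/idP/idP => [/above c_lt | lt_j].
    rewrite ltnNge; apply/negP => le_i.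
    by have := G_nonincr i.+1 (pi^-1%g j).+1 le_i; lra.
  by apply: contraTT lt_j => /below lt_c; rewrite -leqNgt i_min // ltW.
exists i => //; case: (ltnP i k) => [lt_i_k | le_k_i].
  have := below (pi (Ordinal lt_i_k)); rewrite cut permK /= ltnn => /(_ isT); lra.
have eq_i_k : i = k by apply/eqP; rewrite eqn_leq le_k_i i_min // Gk.
rewrite eq_i_k Gk in c_le_Gi before_cut *.
case: (posnP k) => [k0 | k_gt0]; first by rewrite k0 G0 ltr01.
by have := before_cut k.-1; rewrite prednK // => /(_ (ltnSn _)); lra.
Qed.

End Chains.

Arguments chain_vertex {R k}.
Arguments tail_mass {R n}.

Section Faces.
Variables (R : realType) (k : nat).
Implicit Types (u a p : 'rV[R]_k) (V : set 'rV[R]_k).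

Lemma linf_le a u e : 0 <= e ->
  (forall j, `|a ord0 j - u ord0 j| <= e) -> linf a u <= e.
Proof. by move=> e_ge0 close; apply: bigmax_le. Qed.

Lemma d_inf_le_linf V a u : V a -> (d_inf V u <= (linf a u)%:E)%E.
Proof. by move=> Va; apply: ereal_inf_le; exists (linf a u)%:E => //; exists a. Qed.

Lemma d_inf_lt_near V u e : (d_inf V u < e%:E)%E ->
  exists2 a, V a & forall j, `|a ord0 j - u ord0 j| < e.
Proof.
case/ereal_inf_lt => _ [a Va <-]; rewrite lte_fin => lt_e; exists a => // j.
exact: le_lt_trans (le_bigmax _ (fun i => `|a ord0 i - u ord0 i|) j) lt_e.
Qed.

Lemma conv_avg V n (x : 'I_n -> 'rV[R]_k) : (0 < n)%N ->
  (forall i, V (x i)) -> conv V (\sum_(i < n) n%:R^-1 *: x i).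
Proof.
move=> n_gt0 Vx; exists n, (fun=> n%:R^-1), x; split=> //; split.
  by move=> i; rewrite invr_ge0 ler0n.
by split=> //; rewrite sumr_const card_ord -[_ *+ n]mulr_natr mulVf // pnatr_eq0 -lt0n.
Qed.

Lemma clip_id u : (forall j, `|u ord0 j| <= 1) -> clip u = u.
Proof. by move=> u_le1; apply/rowP => j; rewrite mxE min_l ?u_le1 // mulr_sg_norm. Qed.

Definition round_above (c : R) p : 'rV[R]_k :=
  \row_j (if c < `|p ord0 j| then Num.sg (p ord0 j) else 0).

Lemma face_near_contains_round p (c e : R) V :
  0 <= c <= 1 -> (forall j, e <= `| `|p ord0 j| - c|) ->
  is_face V -> (d_inf (conv V) p < e%:E)%E -> V (round_above c p).
Proof.
move=> c_bounds gap [pi [y V_chain]] /d_inf_lt_near[a].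
move=> [n [w [x [Vx [w_ge0 [w_sum ->]]]]]] close.
have /andP[c_ge0 _] := c_bounds.
have level l : exists i, (i <= k)%N /\ x l = chain_vertex pi y i.
  by have [i i_le ->] := V_chain _ (Vx l); exists i.
have [m xm] := choice level.
pose G := tail_mass w m; pose r j := (pi^-1)%g j.
have sum_chain : \sum_(l < n) w l *: x l = \sum_(l < n) w l *: chain_vertex pi y (m l).
  by apply: eq_bigr => l _; rewrite (proj2 (xm l)).
have {}close j : `|signvec R y ord0 j * G (r j).+1 - p ord0 j| < e.
  by have := close j; rewrite sum_chain chain_comb_coord.
have G_ge0 t : 0 <= G t by apply: tail_mass_ge0.
have above j : c < `|p ord0 j| -> c < G (r j).+1 /\ Num.sg (p ord0 j) = signvec R y ord0 j.
  move=> c_lt; have far : c + e <= `|p ord0 j|.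
    by have := gap j; have := close j; rewrite ler_normr => ? /orP[] ?; lra.
  have [] := sg_near c_ge0 (close j) far; rewrite norm_signvecM ger0_norm //.
  by move=> c_lt_G <-; rewrite sg_signvecM //; lra.
have below j : ~~ (c < `|p ord0 j|) -> G (r j).+1 < c.
  rewrite -leNgt => p_le; have near : `|p ord0 j| <= c - e.
    by have := gap j; have := close j; rewrite ler_normr => ? /orP[] ?; lra.
  by have := norm_lt_near (close j) near; rewrite norm_signvecM ger0_norm.
have G0 : G 0%N = 1 by rewrite /G tail_mass0.
have Gk : G k.+1 = 0 by apply: tail_mass_eq0 => l; rewrite ltnS (proj1 (xm l)).
have [i cut drop] := threshold_cut (tail_mass_nonincr m w_ge0) G0 Gk c_bounds
  (fun j c_lt => proj1 (above j c_lt)) below.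
have [l ml] := tail_mass_drop drop.
suff -> : round_above c p = x l by exact: Vx.
apply/rowP => j; rewrite (proj2 (xm l)) chain_vertexE ml mxE -cut.
by case: ifP => // /above[_ ->].
Qed.

Lemma Psi_hat_nonempty (eps : R) u : 0 < eps -> eps <= (2 * k%:R)^-1 ->
  Psi_hat eps u !=set0.
Proof.
move=> eps_gt0 eps_le.
have [s gap] := exists_avoided_band (fun j => `|clip u ord0 j|) eps_gt0.
have c_bounds : 0 <= s%:R * (2 * eps) <= 1.
  have s_le : (s : nat)%:R <= k%:R :> R by rewrite ler_nat -ltnS.
  have k_eps : k%:R * (2 * eps) <= 1.
    case: (posnP k) => [-> | k_gt0]; first by rewrite mul0r ler01.
    by move: eps_le; rewrite -div1r ler_pdivlMr ?mulr_gt0 ?ltr0n //; lra.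
  have two_eps_ge0 : 0 <= 2 * eps by rewrite mulr_ge0 // ltW.
  by rewrite mulr_ge0 //= (le_trans (ler_wpM2r two_eps_ge0 s_le)).
exists (round_above (s%:R * (2 * eps)) (clip u)) => V [face_V near_V].
exact: face_near_contains_round c_bounds gap face_V near_V.
Qed.

End Faces.

Section Staircase.
Variables (R : realType) (k : nat).
Hypothesis k_gt0 : (0 < k)%N.

Definition staircase : 'rV[R]_k := \row_j ((k%:R - j%:R - 2^-1) / k%:R).

Definition up_vertex t : 'rV[R]_k := chain_vertex 1%g (fun=> true) t.

Definition face_without t : set 'rV[R]_k :=
  Vpy 1%g (fun=> true) `\` [set up_vertex t].

Lemma up_vertexE t j : up_vertex t ord0 j = if (j < t)%N then 1 else 0.
Proof. by rewrite chain_vertexE invg1 perm1 signvecE. Qed.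

Lemma staircase_le1 j : `|staircase ord0 j| <= 1.
Proof.
have j_lt : (j : nat)%:R + 1 <= k%:R :> R by rewrite natr1 ler_nat.
have j_ge0 : 0 <= (j : nat)%:R :> R := ler0n _ _.
have k_pos : 0 < k%:R :> R by rewrite ltr0n.
rewrite mxE ger0_norm; last by rewrite divr_ge0 //; lra.
by rewrite ler_pdivrMr //; lra.
Qed.

Lemma linf_avg_staircase t :
  linf (\sum_(i < k) k%:R^-1 *: up_vertex (bump t i)) staircase <= (2 * k%:R)^-1.
Proof.
have k_pos : 0 < k%:R :> R by rewrite ltr0n.
apply: linf_le => [|j]; first by rewrite invr_ge0 mulr_ge0 // ltW.
set N := (\sum_(i < k) (j < bump t i))%N.
have avgE : (\sum_(i < k) k%:R^-1 *: up_vertex (bump t i)) ord0 j = k%:R^-1 * N%:R.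
  rewrite summxE natr_sum mulr_sumr; apply: eq_bigr => i _.
  by rewrite mxE up_vertexE; case: ifP.
have N_ge : (k - j.+1 <= N)%N.
  rewrite -sum_leq_ord; apply: leq_sum => i _.
  by case: (ltnP j i) => // lt_ji; rewrite (leq_trans lt_ji (leq_addl _ _)).
have N_le : (N <= k - j)%N.
  rewrite -sum_leq_ord; apply: leq_sum => i _.
  case: (ltnP j (bump t i)) => // lt_j.
  suff -> : (j <= i)%N by [].
  exact: leq_trans lt_j (bump_leS t i).
move: N_ge N_le; rewrite -!(ler_nat R) !natrB ?ltn_ord 1?ltnW // -natr1 => N_ge N_le.
rewrite avgE mxE [_^-1 * _]mulrC -mulrBl normrM normfV normr_nat.
by rewrite invfM ler_pM2r ?invr_gt0 // ler_norml; apply/andP; split; lra.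
Qed.

Lemma face_without_admissible (eps : R) t : (t <= k)%N -> (2 * k%:R)^-1 < eps ->
  is_face (face_without t) /\ (d_inf (conv (face_without t)) staircase < eps%:E)%E.
Proof.
move=> t_le eps_gt; split; first by exists 1%g, (fun=> true); apply: subDsetl.
apply: le_lt_trans (d_inf_le_linf _ (conv_avg k_gt0 _)) _.
  move=> i; have bump_le : (bump t i <= k)%N := leq_trans (bump_leS t i) (ltn_ord i).
  split; first by exists (bump t i).
  by move/chain_vertex_inj => /(_ bump_le t_le) /eqP; rewrite eq_sym (negbTE (neq_bump t i)).
by rewrite lte_fin (le_lt_trans (linf_avg_staircase t)).
Qed.

Lemma Psi_hat_staircase (eps : R) : (2 * k%:R)^-1 < eps -> Psi_hat eps staircase = set0.
Proof.
move=> eps_gt; rewrite /Psi_hat clip_id; last exact: staircase_le1.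
apply/seteqP; split => // v in_all.
have [[i i_le v_up] _] := in_all _ (face_without_admissible (leq0n k) eps_gt).
by case: (in_all _ (face_without_admissible i_le eps_gt)) => _ /(_ v_up).
Qed.

End Staircase.

Theorem lemma8 (R : realType) (k : nat) (hk : (0 < k)%N) (eps : R) (heps : 0 < eps) :
  (forall u : 'rV[R]_k, @Psi_hat R k eps u <> set0) <-> eps <= (2 * k%:R)^-1.
Proof.
split=> [nonempty | eps_le u empty].
  rewrite leNgt; apply/negP => eps_gt.
  exact: nonempty _ (Psi_hat_staircase hk eps_gt).
have [v Psi_v] := Psi_hat_nonempty u heps eps_le.
by rewrite empty in Psi_v.
Qed.
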